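(* Let $\mathcal{M}$ be an episodic MDP with deterministic expert $\pi^{\operatorname{E}}$ and let $\mathcal{D}_1$ be a finite set of trajectories. For every $\pi\in\Pi_{\mathrm{BC}}(\mathcal{D}_1)$, every $h\in[H]$ and every $(s,a)\in\mathcal{S}\times\mathcal{A}$, $$\sum_{\operatorname{tr}_h\in\mathbf{Tr}_h^{\mathcal{D}_1}}\mathbb{P}^{\pi^{\operatorname{E}}}(\operatorname{tr}_h)\mathbb{I}\{\operatorname{tr}_h(\cdot,\cdot)=(s,a)\}=\sum_{\operatorname{tr}_h\in\mathbf{Tr}_h^{\mathcal{D}_1}}\mathbb{P}^{\pi}(\operatorname{tr}_h)\mathbb{I}\{\operatorname{tr}_h(\cdot,\cdot)=(s,a)\}.$$
   Context: Episodic MDP $(\mathcal{S},\mathcal{A},P,r,H,\rho)$, finite spaces. For a policy $\pi$ and truncated trajectory $\operatorname{tr}_h=(s_1,a_1,\dots,s_h,a_h)$, $\mathbb{P}^\pi(\operatorname{tr}_h)=\rho(s_1)\pi_1(a_1|s_1)\prod_{\ell=1}^{h-1}P_\ell(s_{\ell+1}|s_\ell,a_\ell)\pi_{\ell+1}(a_{\ell+1}|s_{\ell+1})$; $\operatorname{tr}_h(\cdot,\cdot)=(s_h,a_h)$. $\mathcal{S}_\ell(\mathcal{D}_1)$ is the set of states appearing at step $\ell$ in $\mathcal{D}_1$, $\mathbf{Tr}_h^{\mathcal{D}_1}=\{(s_1,a_1,\dots,s_h,a_h):s_\ell\in\mathcal{S}_\ell(\mathcal{D}_1)\ \forall\ell\le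 h\}$. $\Pi_{\mathrm{BC}}(\mathcal{D}_1)$ is the set of policies taking the expert action on states in $\mathcal{D}_1$, i.e. $\pi_h(\pi^{\operatorname{E}}_h(s)|s)=1$ for all $h$ and $s\in\mathcal{S}_h(\mathcal{D}_1)$. *)

(* Steps are 0-indexed internally: step l (0-based) is step l+1 of the paper. *)
From mathcomp Require Import all_boot all_order all_algebra.
Set Implicit Arguments. Unset Strict Implicit. Unset Printing Implicit Defensive.
Import Order.TTheory GRing.Theory Num.Theory.
Local Open Scope ring_scope.

Section MDP.
Variables (R : realFieldType) (S A : finType).

(* rho : initial distribution; P l s a s' = P_{l+1}(s'|s,a); pi l s a = pi_{l+1}(a|s). *)
Definition is_distr (mu : S -> R) := (forall s, 0 <= mu s) /\ \sum_s mu s = 1.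
Definition is_transition (P : nat -> S -> A -> S -> R) :=
  forall l s a, (forall s', 0 <= P l s a s') /\ \sum_s' P l s a s' = 1.
Definition is_policy (pi : nat -> S -> A -> R) :=
  forall l s, (forall a, 0 <= pi l s a) /\ \sum_a pi l s a = 1.

Definition det_policy (piE : nat -> S -> A) : nat -> S -> A -> R :=
  fun l s a => (a == piE l s)%:R.

Fixpoint traj_prob_aux (P : nat -> S -> A -> S -> R) (pi : nat -> S -> A -> R)
    (l : nat) (sa : S * A) (rest : seq (S * A)) : R :=
  match rest with
  | [::] => 1
  | sa' :: r => P l sa.1 sa.2 sa'.1 * pi l.+1 sa'.1 sa'.2 * traj_prob_aux P pi l.+1 sa' r
  end.

Definition traj_prob (rho : S -> R) (P : nat -> S -> A -> S -> R)
    (pi : nat -> S -> A -> R) (tr : seq (S * A)) : R :=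
  match tr with
  | [::] => 1
  | sa :: rest => rho sa.1 * pi 0%N sa.1 sa.2 * traj_prob_aux P pi 0%N sa rest
  end.

Definition states_at (H : nat) (D1 : seq {ffun 'I_H -> S * A}) (l : nat) : pred S :=
  fun s => has (fun t : {ffun 'I_H -> S * A} => [exists j : 'I_H, (nat_of_ord j == l) && ((t j).1 == s)]) D1.

Definition in_TrD (H : nat) (D1 : seq {ffun 'I_H -> S * A}) (n : nat)
    (tr : n.-tuple (S * A)) : bool :=
  [forall i : 'I_n, states_at D1 i (tnth tr i).1].

Definition in_PiBC (H : nat) (D1 : seq {ffun 'I_H -> S * A})
    (piE : nat -> S -> A) (pi : nat -> S -> A -> R) : Prop :=
  forall (l : nat) (s : S), (l < H)%N -> states_at D1 l s -> pi l s (piE l s) = 1.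

End MDP.

From mathcomp Require Import all_boot all_order all_algebra.
Set Implicit Arguments. Unset Strict Implicit. Unset Printing Implicit Defensive.
Import Order.TTheory GRing.Theory Num.Theory.
Local Open Scope ring_scope.

(* A BC policy takes the expert action with probability one on every state of
   the dataset, so there it coincides with the expert policy; a trajectory
   whose states all lie in the dataset only queries the policy at such states,
   hence it has the same probability under both policies. *)

Lemma distr_mass1_dirac (R : numDomainType) (A : finType) (mu : A -> R) (a0 : A) :
  (forall a, 0 <= mu a) -> \sum_a mu a = 1 -> mu a0 = 1 ->
  forall a, mu a = (a == a0)%:R.
Proof.
move=> mu_ge0 mu_sum1 mu_a0 a; have [-> //|neq_a] := eqVneq a a0.
have rest0 : \sum_(b | b != a0) mu b = 0.
  by move: mu_sum1; rewrite (bigD1 a0) //= mu_a0 -[RHS]addr0 => /addrI.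
by have := psumr_eq0P (fun b _ => mu_ge0 b) rest0; apply.
Qed.

Section TrajectoryProbability.
Variables (R : realFieldType) (S A : finType) (rho : S -> R).
Variables (P : nat -> S -> A -> S -> R) (pi pi' : nat -> S -> A -> R).

Lemma traj_prob_aux_eq_policy l sa rest :
  (forall k, (k < size rest)%N ->
     pi (l + k.+1) (nth sa rest k).1 =1 pi' (l + k.+1) (nth sa rest k).1) ->
  traj_prob_aux P pi l sa rest = traj_prob_aux P pi' l sa rest.
Proof.
elim: rest l sa => [//|sa' rest IH] l sa eq_pi /=.
have -> : pi l.+1 sa'.1 sa'.2 = pi' l.+1 sa'.1 sa'.2.
  by have := eq_pi 0%N erefl sa'.2; rewrite addn1.
congr (_ * _); apply: IH => k lt_k_rest b.
rewrite (set_nth_default sa) // addSnnS.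
exact: (eq_pi k.+1 lt_k_rest).
Qed.

Lemma traj_prob_eq_policy x0 tr :
  (forall k, (k < size tr)%N -> pi k (nth x0 tr k).1 =1 pi' k (nth x0 tr k).1) ->
  traj_prob rho P pi tr = traj_prob rho P pi' tr.
Proof.
case: tr => [//|sa rest] eq_pi /=.
rewrite (eq_pi 0%N erefl); congr (_ * _).
apply: traj_prob_aux_eq_policy => k lt_k_rest b.
rewrite add0n (set_nth_default x0) //.
exact: (eq_pi k.+1 lt_k_rest).
Qed.

End TrajectoryProbability.

Lemma PiBC_eq_det_policy (R : realFieldType) (S A : finType) (H : nat)
    (D1 : seq {ffun 'I_H -> S * A}) (piE : nat -> S -> A) (pi : nat -> S -> A -> R) :
  is_policy pi -> in_PiBC D1 piE pi ->
  forall l s, (l < H)%N -> states_at D1 l s -> pi l s =1 det_policy R piE l s.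
Proof.
move=> pi_policy pi_BC l s lt_l_H s_in_D1; have [pi_ge0 pi_sum1] := pi_policy l s.
exact: distr_mass1_dirac pi_ge0 pi_sum1 (pi_BC l s lt_l_H s_in_D1).
Qed.

Theorem lemma6 (R : realFieldType) (S A : finType) (H : nat)
  (rho : S -> R) (P : nat -> S -> A -> S -> R) (piE : nat -> S -> A)
  (D1 : seq {ffun 'I_H -> S * A}) (pi : nat -> S -> A -> R) :
  is_distr rho -> is_transition P -> is_policy pi ->
  in_PiBC D1 piE pi ->
  forall (h : 'I_H) (s : S) (a : A),
    \sum_(tr : h.+1.-tuple (S * A) | in_TrD D1 tr)
       traj_prob rho P (det_policy R piE) tr * (tnth tr ord_max == (s, a))%:R
    = \sum_(tr : h.+1.-tuple (S * A) | in_TrD D1 tr)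
       traj_prob rho P pi tr * (tnth tr ord_max == (s, a))%:R.
Proof.
move=> _ _ pi_policy pi_BC h s a.
apply: eq_bigr => tr tr_in_D1; congr (_ * _).
apply: (traj_prob_eq_policy rho P (x0 := tnth tr ord0)) => k; rewrite size_tuple => lt_k_h.
rewrite -(tnth_nth _ _ (Ordinal lt_k_h)) => b; symmetry.
apply: (PiBC_eq_det_policy pi_policy pi_BC).
  by apply: leq_ltn_trans (ltn_ord h); rewrite -ltnS.
exact: (forallP tr_in_D1 (Ordinal lt_k_h)).
Qed.
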